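(* Let $2\le G\le 8$. For $p\in(0,1)$, let $r_1,\dots,r_G$ be i.i.d. $\mathrm{Bernoulli}(p)$, $R=\sum_j r_j$, $\hat p=R/G$, $\hat A_i=r_i-\hat p$, $A_i=r_i-p$, $\mathcal S=\{1\le R\le G-1\}$. For an interval $I\subseteq[0,1]$ of positive length and an event $E$, set $\mathbb P(E\mid\mathcal S,\ p\in I):=\frac{1}{|I|}\int_I \mathbb P_p(E\mid \mathcal S)\,dp$, where $\mathbb P_p$ is the law for expected reward $p$ (i.e. $p$ is uniformly distributed on $I$). Then for every $i\in[G]$: \[ \begin{aligned} &\mathbb P(\hat A_i<A_i\mid\mathcal S,\ p<0.5)>0.63, &&\mathbb P(\hat A_i>A_i\mid\mathcal S,\ p>0.5)>0.63,\\ &\mathbb P(\hat A_i<A_i\mid\mathcal S,\ p<0.25)>0.78, &&\mathbb P(\hat A_i>A_i\mid\mathcal S,\ p>0.75)>0.78,\\ &\mathbb P(\hat A_i<A_i\mid\mathcal S,\ p<0.125)=1, &&\mathbb P(\hat A_i>A_i\mid\mathcal S,\ p>0.875)=1. \end{aligned} \]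
   Context: Binary-reward group setting: $\hat p$ is the group baseline, $\hat A_i$ the group-relative advantage, $A_i$ the expected advantage, $\mathcal S$ the non-degenerate event. The expected reward $p$ is assumed uniformly distributed over $[0,1]$, and conditioning on $p$ lying in a subinterval is understood as averaging the conditional probability given $\mathcal S$ uniformly over that subinterval. *)

From Stdlib Require Import Reals List ClassicalDescription.
From Coquelicot Require Import Coquelicot.
Import ListNotations.
Open Scope R_scope.

Fixpoint outcomes (n : nat) : list (list bool) :=
  match n with
  | O => [nil]
  | S n' => flat_map (fun w => [true :: w; false :: w]) (outcomes n')
  end.

Definition b2R (b : bool) : R := if b then 1 else 0.

(* r_i (0-indexed, i < G) *)
Definition rew (i : nat) (w : list bool) : R := b2R (nth i w false).

Definition Rtot (w : list bool) : R := fold_right (fun (b : bool) (acc : R) => b2R b + acc) 0 w.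

Definition weight (p : R) (w : list bool) : R :=
  fold_right (fun (b : bool) (acc : R) => (if b then p else 1 - p) * acc) 1 w.

Definition prob (G : nat) (p : R) (E : list bool -> Prop) : R :=
  fold_right (fun (w : list bool) (acc : R) =>
     (if excluded_middle_informative (E w) then weight p w else 0) + acc)
    0 (outcomes G).

Definition phat (G : nat) (w : list bool) : R := Rtot w / INR G.
Definition Ahat (G i : nat) (w : list bool) : R := rew i w - phat G w.
Definition Aexp (p : R) (i : nat) (w : list bool) : R := rew i w - p.

Definition nondeg (G : nat) (w : list bool) : Prop :=
  1 <= Rtot w <= INR G - 1.

Definition condP (G : nat) (p : R) (E : list bool -> Prop) : R :=
  prob G p (fun w => E w /\ nondeg G w) / prob G p (nondeg G).

Definition avgCondP (G : nat) (a b : R) (E : R -> list bool -> Prop) : R :=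
  RInt (fun p => condP G p (E p)) a b / (b - a).

From Stdlib Require Import Reals List ClassicalDescription Lia Lra.
From Stdlib Require Import QArith Qreals QMicromega RMicromega.
From Coquelicot Require Import Coquelicot.
Import ListNotations.
Open Scope R_scope.

(* Since Â_i - A_i = p - p̂, the two events are {p̂ > p} and {p̂ < p} whatever i is, and
   flipping every reward (p ↦ 1 - p, p̂ ↦ 1 - p̂) exchanges them, so only the average of
   P_p(p̂ > p | S) over intervals [0, b] matters.  When k <= pG < k + 1, the event
   {p̂ > p} ∩ S is {k < R <= G - 1}, hence P_p(p̂ > p | S) = N_k(p) / D(p) with N_k and
   D = P_p(S) binomial tail polynomials.  On the first cell N_0 = D, which gives the value 1
   for p < 1/8 <= 1/G.  On the other cells 1/D >= Σ_{m<M} (1 - D)^m turns the integrand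
   into a polynomial with rational coefficients whose integral is computed exactly; for each
   2 <= G <= 8 the sum of these bounds over the cells exceeds the claimed constants. *)

Fixpoint ones (w : list bool) : nat :=
  match w with [] => O | b :: w' => ((if b then 1 else 0) + ones w')%nat end.

Lemma Rtot_ones w : Rtot w = INR (ones w).
Proof.
  induction w as [|b w IH]; [reflexivity|].
  cbn [Rtot fold_right ones]. fold (Rtot w). rewrite IH, plus_INR.
  destruct b; simpl; lra.
Qed.

Lemma Rtot_map_negb w : Rtot (map negb w) = INR (length w) - Rtot w.
Proof.
  induction w as [|b w IH]; [simpl; lra|].
  cbn [Rtot fold_right map length]. fold (Rtot w) (Rtot (map negb w)).
  rewrite IH, S_INR. destruct b; simpl; lra.
Qed.

Lemma outcomes_length n w : In w (outcomes n) -> length w = n.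
Proof.
  revert w; induction n as [|n IH]; intros w Hw; simpl in Hw.
  - destruct Hw as [<-|[]]; reflexivity.
  - apply in_flat_map in Hw as (v & Hv & Hw).
    destruct Hw as [<-|[<-|[]]]; simpl; f_equal; apply IH, Hv.
Qed.

Definition sum_list (f : list bool -> R) (L : list (list bool)) : R :=
  fold_right (fun w acc => f w + acc) 0 L.

Lemma sum_list_app f L1 L2 : sum_list f (L1 ++ L2) = sum_list f L1 + sum_list f L2.
Proof. induction L1 as [|w L1 IH]; simpl; [lra|]. unfold sum_list in *; simpl; rewrite IH; lra. Qed.

Lemma sum_list_flat_map f g L :
  sum_list f (flat_map g L) = sum_list (fun w => sum_list f (g w)) L.
Proof. induction L as [|w L IH]; simpl; [reflexivity|]. rewrite sum_list_app, IH. reflexivity. Qed.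

Lemma sum_list_ext_in f g L :
  (forall w, In w L -> f w = g w) -> sum_list f L = sum_list g L.
Proof.
  induction L as [|w L IH]; intro H; [reflexivity|]. unfold sum_list in *; simpl.
  rewrite H by (left; reflexivity). rewrite IH by (intros v Hv; apply H; right; exact Hv).
  reflexivity.
Qed.

Lemma sum_list_lin a b f g L :
  sum_list (fun w => a * f w + b * g w) L = a * sum_list f L + b * sum_list g L.
Proof. induction L as [|w L IH]; unfold sum_list in *; simpl; [lra|]. rewrite IH; lra. Qed.

Lemma prob_sum_list n p E :
  prob n p E =
  sum_list (fun w => if excluded_middle_informative (E w) then weight p w else 0) (outcomes n).
Proof. reflexivity. Qed.

Lemma prob_cons n p E :
  prob (S n) p E =
  p * prob n p (fun w => E (true :: w)) + (1 - p) * prob n p (fun w => E (false :: w)).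
Proof.
  rewrite !prob_sum_list. cbn [outcomes]. rewrite sum_list_flat_map, <- sum_list_lin.
  apply sum_list_ext_in; intros w _. unfold sum_list; simpl.
  destruct (excluded_middle_informative (E (true :: w)));
  destruct (excluded_middle_informative (E (false :: w))); lra.
Qed.

Lemma prob_ext_in n p E E' :
  (forall w, In w (outcomes n) -> (E w <-> E' w)) -> prob n p E = prob n p E'.
Proof.
  intro H. rewrite !prob_sum_list. apply sum_list_ext_in; intros w Hw.
  destruct (excluded_middle_informative (E w)) as [e|e];
  destruct (excluded_middle_informative (E' w)) as [e'|e']; try reflexivity;
  exfalso; [apply e' | apply e]; apply (H w Hw); assumption.
Qed.

Lemma prob_map_negb n p E :
  prob n p E = prob n (1 - p) (fun w => E (map negb w)).
Proof.
  revert E; induction n as [|n IH]; intro E; [reflexivity|].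
  rewrite !prob_cons, (IH (fun w => E (true :: w))), (IH (fun w => E (false :: w))).
  cbn [map negb]. replace (1 - (1 - p)) with p by ring. lra.
Qed.

Fixpoint binP (n : nat) (p : R) (q : nat -> bool) : R :=
  match n with
  | O => if q O then 1 else 0
  | S n' => p * binP n' p (fun c => q (S c)) + (1 - p) * binP n' p q
  end.

Lemma prob_count n p E q :
  (forall w, E w <-> q (ones w) = true) -> prob n p E = binP n p q.
Proof.
  revert p E q; induction n as [|n IH]; intros p E q H.
  - unfold prob; simpl. specialize (H []); simpl in H.
    destruct (excluded_middle_informative (E [])) as [e|e]; destruct (q O);
      try lra; [apply H in e; discriminate | exfalso; apply e, H; reflexivity].
  - rewrite prob_cons. simpl.
    f_equal; f_equal; apply IH; intro w; rewrite H; reflexivity.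
Qed.

Lemma binP_nonneg n p q : 0 <= p <= 1 -> 0 <= binP n p q.
Proof.
  revert q; induction n as [|n IH]; intros q Hp; simpl; [destruct (q O); lra|].
  specialize (IH (fun c => q (S c)) Hp) as H1. specialize (IH q Hp) as H2. nra.
Qed.

Lemma binP_negb n p q : binP n p q + binP n p (fun c => negb (q c)) = 1.
Proof.
  revert q; induction n as [|n IH]; intro q; simpl; [destruct (q O); simpl; lra|].
  specialize (IH (fun c => q (S c))) as H1. specialize (IH q) as H2. simpl in *. nra.
Qed.

Lemma binP_le1 n p q : 0 <= p <= 1 -> binP n p q <= 1.
Proof.
  intro Hp. assert (H := binP_negb n p q).
  assert (H' := binP_nonneg n p (fun c => negb (q c)) Hp). lra.
Qed.

Lemma binP_pos n p q c : 0 < p < 1 -> (c <= n)%nat -> q c = true -> 0 < binP n p q.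
Proof.
  revert q c; induction n as [|n IH]; intros q c Hp Hc Hq; simpl.
  - replace c with O in Hq by lia. rewrite Hq. lra.
  - assert (N1 := binP_nonneg n p (fun j => q (S j)) ltac:(lra)).
    assert (N2 := binP_nonneg n p q ltac:(lra)).
    destruct c as [|c].
    + assert (0 < binP n p q) by (apply (IH q O); auto; lia). nra.
    + assert (0 < binP n p (fun j => q (S j))) by (apply (IH _ c); auto; lia). nra.
Qed.

Lemma Ahat_lt_Aexp G i p w : Ahat G i w < Aexp p i w <-> p < phat G w.
Proof. unfold Ahat, Aexp. lra. Qed.

Lemma Ahat_gt_Aexp G i p w : Ahat G i w > Aexp p i w <-> phat G w < p.
Proof. unfold Ahat, Aexp. lra. Qed.

Definition window (lo hi c : nat) : bool := (lo <=? c)%nat && (c <=? hi)%nat.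

Lemma window_spec lo hi c : window lo hi c = true <-> (lo <= c <= hi)%nat.
Proof. unfold window. rewrite andb_true_iff, !Nat.leb_le. reflexivity. Qed.

Lemma nondeg_window G w : (1 <= G)%nat -> nondeg G w <-> window 1 (G - 1) (ones w) = true.
Proof.
  intro HG. unfold nondeg. rewrite Rtot_ones, window_spec.
  replace (INR G - 1) with (INR (G - 1)) by (rewrite minus_INR by lia; simpl; lra).
  split.
  - intros [h1 h2]. split; apply INR_le; simpl; lra.
  - intros [h1 h2]. apply le_INR in h1, h2. simpl in h1. lra.
Qed.

Lemma binP_nondeg_pos G p : (2 <= G)%nat -> 0 < p < 1 -> 0 < binP G p (window 1 (G - 1)).
Proof. intros HG Hp. apply (binP_pos G p _ 1); [exact Hp | lia | apply window_spec; lia]. Qed.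

Lemma phat_gt_nondeg_window G k p w : (1 <= G)%nat -> INR k <= p * INR G < INR k + 1 ->
  (p < phat G w /\ nondeg G w) <-> window (S k) (G - 1) (ones w) = true.
Proof.
  intros HG Hp. rewrite (nondeg_window G w HG), !window_spec.
  assert (HG' : 0 < INR G) by (apply lt_0_INR; lia).
  assert (Hphat : phat G w * INR G = INR (ones w))
    by (unfold phat; rewrite Rtot_ones; field; lra).
  assert (E : p < phat G w <-> (k < ones w)%nat).
  { split; intro H.
    - apply INR_lt. nra.
    - apply le_INR in H. rewrite S_INR in H. nra. }
  rewrite E. lia.
Qed.

Definition condP_phat_gt (G : nat) (p : R) : R := condP G p (fun w => p < phat G w).

Lemma condP_ext G p E E' : (forall w, E w <-> E' w) -> condP G p E = condP G p E'.
Proof.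
  intro H. unfold condP. f_equal; apply prob_ext_in; intros w _; rewrite ?H; reflexivity.
Qed.

Lemma condP_phat_gt_cell G k p : (1 <= G)%nat -> INR k <= p * INR G < INR k + 1 ->
  condP_phat_gt G p = binP G p (window (S k) (G - 1)) / binP G p (window 1 (G - 1)).
Proof.
  intros HG Hp. unfold condP_phat_gt, condP. f_equal; apply prob_count; intro w.
  - apply phat_gt_nondeg_window; assumption.
  - apply nondeg_window, HG.
Qed.

Lemma condP_phat_lt G p : (1 <= G)%nat ->
  condP G p (fun w => phat G w < p) = condP_phat_gt G (1 - p).
Proof.
  intro HG. unfold condP_phat_gt, condP. rewrite !(prob_map_negb G p).
  assert (HG' : 0 < INR G) by (apply lt_0_INR; lia).
  assert (Hflip : forall w, In w (outcomes G) ->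
            phat G (map negb w) = 1 - phat G w /\ (nondeg G (map negb w) <-> nondeg G w)).
  { intros w Hw. unfold phat, nondeg. rewrite Rtot_map_negb, (outcomes_length G w Hw).
    split; [field; lra | lra]. }
  f_equal; apply prob_ext_in; intros w Hw; destruct (Hflip w Hw) as [E1 E2];
    cbv beta; [rewrite E1, E2; intuition lra | exact E2].
Qed.

Fixpoint horner (cs : list Q) (x : R) : R :=
  match cs with [] => 0 | c :: cs' => Q2R c + x * horner cs' x end.

Fixpoint padd (a b : list Q) : list Q :=
  match a, b with
  | [], _ => b
  | _, [] => a
  | x :: a', y :: b' => (x + y)%Q :: padd a' b'
  end.

Definition pscal (c : Q) (a : list Q) : list Q := map (Qmult c) a.

Fixpoint pmul (a b : list Q) : list Q :=
  match a with [] => [] | x :: a' => padd (pscal x b) (0%Q :: pmul a' b) end.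

Lemma horner_padd a b x : horner (padd a b) x = horner a x + horner b x.
Proof.
  revert b; induction a as [|u a IH]; intro b; simpl; [lra|].
  destruct b as [|v b]; simpl; [lra|]. rewrite IH, Q2R_plus. ring.
Qed.

Lemma horner_pscal c a x : horner (pscal c a) x = Q2R c * horner a x.
Proof. induction a as [|u a IH]; simpl; [ring|]. rewrite IH, Q2R_mult. ring. Qed.

Lemma horner_pmul a b x : horner (pmul a b) x = horner a x * horner b x.
Proof.
  induction a as [|u a IH]; simpl; [ring|].
  rewrite horner_padd, horner_pscal. simpl. rewrite IH, Q2R_0. ring.
Qed.

Lemma horner_continuous cs x : continuous (horner cs) x.
Proof.
  induction cs as [|c cs IH]; simpl; [apply continuous_const|].
  apply (continuous_plus (fun _ => Q2R c) (fun y => y * horner cs y)); [apply continuous_const|].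
  apply (continuous_mult (fun y => y) (horner cs)); [apply continuous_id | exact IH].
Qed.

Fixpoint pbin (n : nat) (q : nat -> bool) : list Q :=
  match n with
  | O => if q O then [1%Q] else []
  | S n' => padd (pmul [0; 1]%Q (pbin n' (fun c => q (S c)))) (pmul [1; -1]%Q (pbin n' q))
  end.

Lemma horner_pbin n q x : horner (pbin n q) x = binP n x q.
Proof.
  revert q; induction n as [|n IH]; intro q; cbn [pbin binP].
  - destruct (q O); simpl; [rewrite Q2R_1|]; ring.
  - rewrite horner_padd, !horner_pmul, !IH. simpl.
    replace (Q2R (-1)) with (-1) by (unfold Q2R; simpl; lra).
    rewrite Q2R_0, Q2R_1. ring.
Qed.

Fixpoint geom (M : nat) (u : R) : R :=
  match M with O => 0 | S M' => 1 + u * geom M' u end.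

Fixpoint pgeom (M : nat) (u : list Q) : list Q :=
  match M with O => [] | S M' => padd [1%Q] (pmul u (pgeom M' u)) end.

Lemma horner_pgeom M u x : horner (pgeom M u) x = geom M (horner u x).
Proof.
  induction M as [|M IH]; cbn [pgeom geom]; [reflexivity|].
  rewrite horner_padd, horner_pmul, IH. simpl. rewrite Q2R_1. ring.
Qed.

Lemma geom_le_inv M u : 0 <= u < 1 -> geom M u <= / (1 - u).
Proof.
  intro Hu.
  assert (Hgeom : geom M u * (1 - u) = 1 - u ^ M).
  { induction M as [|M IH]; simpl; [ring|].
    transitivity (1 - u + u * (geom M u * (1 - u))); [ring|]. rewrite IH. ring. }
  assert (0 <= u ^ M) by (apply pow_le; lra).
  apply (Rmult_le_reg_r (1 - u)); [lra|]. rewrite Hgeom, Rinv_l by lra. lra.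
Qed.

Fixpoint qpow (a : Q) (n : nat) : Q :=
  match n with O => 1%Q | S n' => (a * qpow a n')%Q end.

Lemma Q2R_qpow a n : Q2R (qpow a n) = Q2R a ^ n.
Proof. induction n as [|n IH]; simpl; [apply Q2R_1|]. rewrite Q2R_mult, IH. reflexivity. Qed.

Definition QN (n : nat) : Q := inject_Z (Z.of_nat n).

Lemma Q2R_QN n : Q2R (QN n) = INR n.
Proof. unfold Q2R, QN; simpl. rewrite INR_IZR_INZ. field. Qed.

Fixpoint pint_from (n : nat) (cs : list Q) (a b : Q) : Q :=
  match cs with
  | [] => 0%Q
  | c :: cs' =>
      Qred (Qred (c * (qpow b (S n) - qpow a (S n)) / QN (S n)) + pint_from (S n) cs' a b)
  end.

Definition pint (cs : list Q) (a b : Q) : Q := pint_from 0 cs a b.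

Lemma is_RInt_pow_horner n cs a b :
  is_RInt (fun x => x ^ n * horner cs x) (Q2R a) (Q2R b) (Q2R (pint_from n cs a b)).
Proof.
  revert n; induction cs as [|c cs IH]; intro n; cbn [pint_from horner].
  - rewrite Q2R_0. apply (is_RInt_ext (fun _ => 0)); [intros; cbn -[Q2R horner]; ring|].
    assert (H := is_RInt_const (V := R_NormedModule) (Q2R a) (Q2R b) 0).
    cbn in H. rewrite Rmult_0_r in H. exact H.
  - assert (HN : INR (S n) <> 0) by (apply not_0_INR; lia).
    rewrite (Qeq_eqR _ _ (Qred_correct _)), Q2R_plus, (Qeq_eqR _ _ (Qred_correct _)), Q2R_div
      by (intro H; apply Qeq_eqR in H; rewrite Q2R_QN, Q2R_0 in H; exact (HN H)).
    rewrite Q2R_mult, Q2R_minus, !Q2R_qpow, Q2R_QN.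
    apply (is_RInt_ext (fun x => Q2R c * x ^ n + x ^ S n * horner cs x));
      [intros; cbn -[Q2R horner]; ring|].
    apply (is_RInt_plus (fun x => Q2R c * x ^ n)); [|apply IH].
    replace (Q2R c * (Q2R b ^ S n - Q2R a ^ S n) / INR (S n))
      with (scal (Q2R c) (Q2R b ^ S n / INR (S n) - Q2R a ^ S n / INR (S n)))
      by (unfold scal; simpl; unfold mult; simpl; field; exact HN).
    apply (is_RInt_scal (fun x => x ^ n)), is_RInt_pow.
Qed.

Lemma RInt_horner cs a b : RInt (horner cs) (Q2R a) (Q2R b) = Q2R (pint cs a b).
Proof.
  apply is_RInt_unique, (is_RInt_ext (fun x => x ^ 0 * horner cs x));
    [intros; cbn -[Q2R horner]; ring | apply is_RInt_pow_horner].
Qed.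

Lemma RInt_reflect (f : R -> R) a b :
  ex_RInt f a b -> RInt (fun p => f (1 - p)) (1 - b) (1 - a) = RInt f a b.
Proof.
  intro Hf. apply is_RInt_unique.
  assert (Hba : is_RInt f (-1 * (1 - b) + 1) (-1 * (1 - a) + 1) (- RInt f a b)).
  { replace (-1 * (1 - b) + 1) with b by ring. replace (-1 * (1 - a) + 1) with a by ring.
    exact (is_RInt_swap f b a _ (RInt_correct f a b Hf)). }
  apply is_RInt_comp_lin, (is_RInt_scal _ _ _ (-1)) in Hba.
  change (scal (-1) (- RInt f a b)) with (-1 * - RInt f a b) in Hba.
  assert (E : -1 * - RInt f a b = RInt f a b :> R) by ring. rewrite E in Hba.
  refine (is_RInt_ext _ _ _ _ _ _ Hba). intros p _. cbn.
  replace (-1 * p + 1) with (1 - p) by ring. ring.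
Qed.

Definition lb_poly (G k M : nat) : list Q :=
  pmul (pbin G (window (S k) (G - 1)))
       (pgeom M (padd [1%Q] (pscal (-1)%Q (pbin G (window 1 (G - 1)))))).

Lemma horner_lb_poly_le G k M p : (2 <= G)%nat -> 0 < p < 1 ->
  INR k <= p * INR G < INR k + 1 -> horner (lb_poly G k M) p <= condP_phat_gt G p.
Proof.
  intros HG Hp Hk. rewrite (condP_phat_gt_cell G k p) by (lia || lra).
  unfold lb_poly. rewrite horner_pmul, horner_pgeom, horner_padd, horner_pscal, !horner_pbin.
  replace (horner [1%Q] p) with 1 by (simpl; rewrite Q2R_1; ring).
  replace (Q2R (-1)) with (-1) by (unfold Q2R; simpl; lra).
  set (D := binP G p (window 1 (G - 1))).
  assert (HD : 0 < D) by (apply binP_nondeg_pos; assumption).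
  assert (HD1 : D <= 1) by (apply binP_le1; lra).
  assert (HN : 0 <= binP G p (window (S k) (G - 1))) by (apply binP_nonneg; lra).
  unfold Rdiv. apply Rmult_le_compat_l; [exact HN|].
  replace D with (1 - (1 + -1 * D)) at 2 by ring. apply geom_le_inv. lra.
Qed.

Lemma cell_interior G k x y p : (1 <= G)%nat ->
  INR k <= x * INR G -> y * INR G <= INR k + 1 -> x < p < y ->
  INR k <= p * INR G < INR k + 1.
Proof. intros HG Hx Hy Hp. assert (0 < INR G) by (apply lt_0_INR; lia). split; nra. Qed.

Lemma RInt_condP_phat_gt_first_cell G x y : (2 <= G)%nat ->
  0 <= x -> x < y -> y * INR G <= 1 ->
  ex_RInt (condP_phat_gt G) x y /\ RInt (condP_phat_gt G) x y = y - x.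
Proof.
  intros HG Hx Hxy Hy.
  assert (HG' : 2 <= INR G) by (apply (le_INR 2); lia).
  assert (Hone : forall p, Rmin x y < p < Rmax x y -> 1 = condP_phat_gt G p).
  { intros p Hp. rewrite Rmin_left, Rmax_right in Hp by lra.
    assert (Hc : INR 0 <= p * INR G < INR 0 + 1)
      by (apply (cell_interior G 0 x y); simpl; [lia | nra | lra | exact Hp]).
    rewrite (condP_phat_gt_cell G 0 p ltac:(lia) Hc).
    field. apply Rgt_not_eq, binP_nondeg_pos; [exact HG | nra]. }
  split.
  - apply (ex_RInt_ext (fun _ => 1)); [exact Hone | apply ex_RInt_const].
  - rewrite <- (RInt_ext (fun _ => 1)) by exact Hone. rewrite RInt_const.
    cbn. ring.
Qed.

Lemma RInt_condP_phat_gt_cell_ge G k M x y : (2 <= G)%nat ->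
  INR k <= x * INR G -> x < y -> y * INR G <= INR k + 1 -> 0 < x -> y < 1 ->
  ex_RInt (condP_phat_gt G) x y /\
  RInt (horner (lb_poly G k M)) x y <= RInt (condP_phat_gt G) x y.
Proof.
  intros HG Hx Hxy Hy Hx0 Hy1.
  set (ratio := fun p => horner (pbin G (window (S k) (G - 1))) p
                        / horner (pbin G (window 1 (G - 1))) p).
  assert (Hratio : forall p, Rmin x y < p < Rmax x y -> ratio p = condP_phat_gt G p).
  { intros p Hp. rewrite Rmin_left, Rmax_right in Hp by lra.
    assert (Hc := cell_interior G k x y p ltac:(lia) Hx Hy Hp).
    unfold ratio. rewrite !horner_pbin. symmetry. apply condP_phat_gt_cell; [lia | exact Hc]. }
  assert (Hint : ex_RInt ratio x y).
  { apply (ex_RInt_continuous (V := R_CompleteNormedModule)). intros z Hz.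
    rewrite Rmin_left, Rmax_right in Hz by lra.
    apply (continuous_mult (horner _) (fun p => / horner _ p)); [apply horner_continuous|].
    apply continuous_Rinv_comp; [apply horner_continuous|].
    rewrite horner_pbin. apply Rgt_not_eq, binP_nondeg_pos; [exact HG | lra]. }
  assert (Hint' : ex_RInt (condP_phat_gt G) x y) by exact (ex_RInt_ext _ _ x y Hratio Hint).
  split; [exact Hint'|].
  apply RInt_le; [lra | | exact Hint' |].
  - apply (ex_RInt_continuous (V := R_CompleteNormedModule)). intros; apply horner_continuous.
  - intros p Hp. apply horner_lb_poly_le; [exact HG | nra |].
    exact (cell_interior G k x y p ltac:(lia) Hx Hy Hp).
Qed.

Lemma Qle_bool_Rle a b : Qle_bool a b = true -> Q2R a <= Q2R b.
Proof. intro H. apply Qle_Rle, Qle_bool_iff, H. Qed.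

Lemma Qlt_bool_Rlt a b : Qlt_bool a b = true -> Q2R a < Q2R b.
Proof. intro H. apply Qlt_Rlt, Qlt_bool_iff, H. Qed.

Definition piece_ok (G k : nat) (x y : Q) : bool :=
  Qle_bool 0 x && Qlt_bool x y && Qlt_bool y 1 &&
  Qle_bool (QN k) (x * QN G) && Qle_bool (y * QN G) (QN k + 1).

Definition piece_lb (G M k : nat) (x y : Q) : Q :=
  if (k =? 0)%nat then (y - x)%Q else pint (lb_poly G k M) x y.

Lemma piece_lb_sound G M k x y : (2 <= G)%nat -> piece_ok G k x y = true ->
  ex_RInt (condP_phat_gt G) (Q2R x) (Q2R y) /\
  Q2R (piece_lb G M k x y) <= RInt (condP_phat_gt G) (Q2R x) (Q2R y).
Proof.
  intros HG Hok. unfold piece_ok in Hok. rewrite !andb_true_iff in Hok.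
  destruct Hok as [[[[H0x Hxy] Hy1] Hkx] Hyk].
  apply Qle_bool_Rle in H0x, Hkx, Hyk. apply Qlt_bool_Rlt in Hxy, Hy1.
  rewrite Q2R_mult, !Q2R_QN in Hkx. rewrite Q2R_plus, Q2R_mult, !Q2R_QN, Q2R_1 in Hyk.
  rewrite Q2R_0 in H0x. rewrite Q2R_1 in Hy1.
  unfold piece_lb. destruct (Nat.eqb_spec k 0) as [->|Hk].
  - simpl in Hyk. rewrite Rplus_0_l in Hyk.
    destruct (RInt_condP_phat_gt_first_cell G (Q2R x) (Q2R y)) as [E1 E2]; try assumption.
    split; [exact E1|]. rewrite E2, Q2R_minus. lra.
  - assert (H1k : 1 <= INR k) by (apply (le_INR 1); lia).
    assert (HG' : 0 < INR G) by (apply lt_0_INR; lia).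
    rewrite <- RInt_horner. apply RInt_condP_phat_gt_cell_ge; try assumption. nra.
Qed.

Lemma last_cons {A} (l : list A) (y d : A) : last (y :: l) d = last l y.
Proof.
  revert y d; induction l as [|z l IH]; intros y d; [reflexivity|].
  change (last (z :: l) d = last (z :: l) y). rewrite !IH. reflexivity.
Qed.

(* The [j]-th piece [x, y] of a chain starting at cell [k] must lie in the cell
   [(k + j) / G, (k + j + 1) / G]. *)
Fixpoint chain_ok (G k : nat) (x : Q) (pts : list Q) : bool :=
  match pts with
  | [] => true
  | y :: pts' => piece_ok G k x y && chain_ok G (S k) y pts'
  end.

Fixpoint chain_lb (G M k : nat) (x : Q) (pts : list Q) : Q :=
  match pts with
  | [] => 0%Q
  | y :: pts' => (piece_lb G M k x y + chain_lb G M (S k) y pts')%Q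
  end.

Lemma chain_lb_sound G M pts k x : (2 <= G)%nat -> chain_ok G k x pts = true ->
  ex_RInt (condP_phat_gt G) (Q2R x) (Q2R (last pts x)) /\
  Q2R (chain_lb G M k x pts) <= RInt (condP_phat_gt G) (Q2R x) (Q2R (last pts x)).
Proof.
  intro HG. revert k x; induction pts as [|y pts IH]; intros k x Hok.
  - cbn [last chain_lb]. rewrite RInt_point, Q2R_0.
    split; [apply ex_RInt_point | apply Rle_refl].
  - rewrite last_cons. cbn [chain_ok] in Hok. apply andb_prop in Hok as [Hpiece Hrest].
    destruct (piece_lb_sound G M k x y HG Hpiece) as [I1 L1].
    destruct (IH (S k) y Hrest) as [I2 L2].
    split; [exact (ex_RInt_Chasles _ _ _ _ I1 I2)|].
    rewrite <- (RInt_Chasles _ _ _ _ I1 I2). cbn [chain_lb]. rewrite Q2R_plus.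
    exact (Rplus_le_compat _ _ _ _ L1 L2).
Qed.

Definition cutpoints (G : nat) (b : Q) : list Q :=
  filter (fun q => Qlt_bool q b) (map (fun j => QN j / QN G)%Q (seq 1 (G - 1))) ++ [b].

Definition avg_bound_ok (G M : nat) (b c : Q) : bool :=
  chain_ok G 0 0 (cutpoints G b) && Qlt_bool 0 b &&
  Qlt_bool (c * b) (chain_lb G M 0 0 (cutpoints G b)).

Lemma avg_bound_ok_sound G M b c : (2 <= G)%nat -> avg_bound_ok G M b c = true ->
  ex_RInt (condP_phat_gt G) 0 (Q2R b) /\ RInt (condP_phat_gt G) 0 (Q2R b) / (Q2R b - 0) > Q2R c.
Proof.
  intros HG Hok. unfold avg_bound_ok in Hok. rewrite !andb_true_iff in Hok.
  destruct Hok as [[Hchain Hb] Hc]. apply Qlt_bool_Rlt in Hb, Hc.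
  rewrite Q2R_mult in Hc. rewrite Q2R_0 in Hb.
  destruct (chain_lb_sound G M _ 0 0 HG Hchain) as [I L].
  unfold cutpoints in *. rewrite last_last, Q2R_0 in I, L.
  split; [exact I|]. apply Rlt_gt, (Rmult_lt_reg_r (Q2R b)); [exact Hb|].
  unfold Rdiv. rewrite Rminus_0_r, Rmult_assoc, Rinv_l by lra. lra.
Qed.

(* Four terms of the geometric series are the fewest for which every check succeeds. *)
Lemma avg_bounds_ok_small_G G : (2 <= G <= 8)%nat ->
  avg_bound_ok G 4 (1#2) (63#100) = true /\ avg_bound_ok G 4 (1#4) (78#100) = true.
Proof.
  intro HG.
  assert (G = 2 \/ G = 3 \/ G = 4 \/ G = 5 \/ G = 6 \/ G = 7 \/ G = 8)%nat as HG' by lia.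
  repeat destruct HG' as [-> | HG']; subst; split; vm_compute; reflexivity.
Qed.

Lemma Q2R_frac n d : Q2R (Z.pos n # d) = IZR (Z.pos n) / IZR (Z.pos d).
Proof. reflexivity. Qed.

Lemma avg_condP_phat_gt_bounds G : (2 <= G <= 8)%nat ->
  (ex_RInt (condP_phat_gt G) 0 (1/2) /\ RInt (condP_phat_gt G) 0 (1/2) / (1/2 - 0) > 63/100) /\
  (ex_RInt (condP_phat_gt G) 0 (1/4) /\ RInt (condP_phat_gt G) 0 (1/4) / (1/4 - 0) > 78/100) /\
  (ex_RInt (condP_phat_gt G) 0 (1/8) /\ RInt (condP_phat_gt G) 0 (1/8) / (1/8 - 0) = 1).
Proof.
  intro HG. assert (HG2 : (2 <= G)%nat) by lia.
  destruct (avg_bounds_ok_small_G G HG) as [B2 B4].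
  apply avg_bound_ok_sound in B2, B4; try exact HG2. rewrite !Q2R_frac in B2, B4.
  split; [exact B2 | split; [exact B4|]].
  assert (HG8 : INR G <= 8) by (rewrite INR_IZR_INZ; apply IZR_le; lia).
  destruct (RInt_condP_phat_gt_first_cell G 0 (1/8)) as [I E]; try (exact HG2 || lra).
  split; [exact I|]. rewrite E. field.
Qed.

Lemma avgCondP_Ahat_lt G i a b :
  avgCondP G a b (fun p w => Ahat G i w < Aexp p i w) = RInt (condP_phat_gt G) a b / (b - a).
Proof. unfold avgCondP. f_equal. apply RInt_ext; intros p _. apply condP_ext, Ahat_lt_Aexp. Qed.

Lemma avgCondP_Ahat_gt G i a b : (1 <= G)%nat -> a + b = 1 -> ex_RInt (condP_phat_gt G) 0 b ->
  avgCondP G a 1 (fun p w => Ahat G i w > Aexp p i w) =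
  avgCondP G 0 b (fun p w => Ahat G i w < Aexp p i w).
Proof.
  intros HG Hab Hint. rewrite avgCondP_Ahat_lt. unfold avgCondP.
  rewrite (RInt_ext _ (fun p => condP_phat_gt G (1 - p))).
  2: { intros p _. rewrite <- condP_phat_lt by exact HG. apply condP_ext, Ahat_gt_Aexp. }
  rewrite <- (RInt_reflect _ 0 b Hint), !Rminus_0_r.
  replace (1 - b) with a by lra. replace b with (1 - a) by lra. reflexivity.
Qed.

Theorem corollary1 (G : nat) (HG : (2 <= G <= 8)%nat) (i : nat) (Hi : (i < G)%nat) :
  avgCondP G 0 (1/2) (fun p w => Ahat G i w < Aexp p i w) > 63/100 /\
  avgCondP G (1/2) 1 (fun p w => Ahat G i w > Aexp p i w) > 63/100 /\
  avgCondP G 0 (1/4) (fun p w => Ahat G i w < Aexp p i w) > 78/100 /\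
  avgCondP G (3/4) 1 (fun p w => Ahat G i w > Aexp p i w) > 78/100 /\
  avgCondP G 0 (1/8) (fun p w => Ahat G i w < Aexp p i w) = 1 /\
  avgCondP G (7/8) 1 (fun p w => Ahat G i w > Aexp p i w) = 1.
Proof.
  destruct (avg_condP_phat_gt_bounds G HG) as ([I2 L2] & [I4 L4] & [I8 L8]).
  rewrite (avgCondP_Ahat_gt G i (1/2) (1/2)), (avgCondP_Ahat_gt G i (3/4) (1/4)),
    (avgCondP_Ahat_gt G i (7/8) (1/8)) by (lia || lra || assumption).
  rewrite !avgCondP_Ahat_lt. repeat split; assumption.
Qed.
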